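(* Assume $r$ is not a codeword of the GRS code (equivalently $\deg R\ge k$). Let $A_{s,\ell}$ be the $(\ell+1)\times(\ell+1)$ matrix over $\mathbb F_q[X]$ whose $t$-th row ($t=0,\dots,\ell$) is the coefficient vector of $P^{(t)}$, where $P^{(t)}=G^{s-t}(Y-R)^t$ for $0\le t<s$ and $P^{(t)}=Y^{t-s}(Y-R)^s$ for $s\le t\le\ell$. Then $\Delta(A_{s,\ell}W_\ell)=\tfrac12(2\ell-s+1)s(\deg R-k+1)\le \ell s(n-k)$.
   Context: Let $\mathbb F_q$ be a finite field, $1\le k<n<q$, $\alpha_0,\dots,\alpha_{n-1}$ distinct nonzero elements of $\mathbb F_q$, $w_0,\dots,w_{n-1}$ nonzero elements of $\mathbb F_q$. The GRS code is $\{(w_0f(\alpha_0),\dots,w_{n-1}f(\alpha_{n-1})): f\in\mathbb F_q[X],\deg f<k\}$. Let $r\in\mathbb F_q^n$, $r_i'=r_i/w_i$, $G(X)=\prod_i(X-\alpha_i)$ and $R(X)$ the unique polynomial of degree $<n$ with $R(\alpha_i)=r_i'$. Let $s\le\ell$ be positive integers. A polynomial $\sum_{t=0}^\ell Q_t(X)Y^t$ has coefficient vector $(Q_0,\dots,Q_\ell)$. $W_\ell=\mathrm{diag}(1,X^{k-1},\dots,X^{\ell(k-1)})$. For a square matrix $V$ over $\mathbb F_q[X]$ with rows $v_i$, $\deg v_i=\max_j\deg v_{i,j}$, $\deg V=\sum_i\deg v_i$ and $\Delta(V)=\deg V-\deg\det V$. *)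

From HB Require Import structures.
From mathcomp Require Import all_boot all_order all_algebra all_field.
Set Implicit Arguments. Unset Strict Implicit. Unset Printing Implicit Defensive.
Import Order.TTheory GRing.Theory Num.Theory.
Local Open Scope ring_scope.

(* degree of a polynomial over F (the zero polynomial gets degree 0;
   only nonzero polynomials occur where this matters) *)
Definition pdeg (R : nzRingType) (p : {poly R}) : nat := (size p).-1.

Definition in_GRS (F : fieldType) (n k : nat) (alpha w : 'I_n -> F)
  (r : 'I_n -> F) : Prop :=
  exists f : {poly F}, (size f <= k)%N /\ forall i, r i = w i * f.[alpha i].

Definition Gpoly (F : fieldType) (n : nat) (alpha : 'I_n -> F) : {poly F} :=
  \prod_(i < n) ('X - (alpha i)%:P).

(* Bivariate polynomials: {poly {poly F}}, outer variable Y, inner X.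
   P^(t) = G^(s-t) (Y-R)^t for t < s, and Y^(t-s) (Y-R)^s for s <= t. *)
Definition Pt (F : fieldType) (G R : {poly F}) (s t : nat) : {poly {poly F}} :=
  if (t < s)%N then (G ^+ (s - t))%:P * ('X - R%:P) ^+ t
  else 'X ^+ (t - s) * ('X - R%:P) ^+ s.

Definition Amat (F : fieldType) (G R : {poly F}) (s l : nat)
  : 'M[{poly F}]_(l.+1) :=
  \matrix_(t < l.+1, j < l.+1) (Pt G R s t)`_j.

Definition Wmat (F : fieldType) (k l : nat) : 'M[{poly F}]_(l.+1) :=
  diag_mx (\row_(j < l.+1) ('X ^+ (j * (k - 1)) : {poly F})).

Definition rowdeg (F : fieldType) (m : nat) (V : 'M[{poly F}]_m) (i : 'I_m)
  : nat := \max_(j < m) pdeg (V i j).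
Definition mxdeg (F : fieldType) (m : nat) (V : 'M[{poly F}]_m) : nat :=
  \sum_(i < m) rowdeg V i.
Definition Delta (F : fieldType) (m : nat) (V : 'M[{poly F}]_m) : int :=
  (mxdeg V)%:Z - (pdeg (\det V))%:Z.

From HB Require Import structures.
From mathcomp Require Import all_boot all_order all_algebra all_field.
From mathcomp Require Import zify ring.
Import Order.TTheory GRing.Theory Num.Theory.
Local Open Scope ring_scope.

(* Multiplying by [W_l] scales column [j] by [X^(j(k-1))], so [M := A_{s,l} W_l]
   is lower triangular with diagonal entries [G^(s-t) X^(t(k-1))], and [deg det M]
   is the sum of their degrees.  Row [t] of [M] is supported on the columns
   [t - s <= j <= t]; as [deg R >= k - 1] its degree is attained at [j = t - s],
   so it exceeds the degree of the diagonal entry by exactly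
   [min(t, s) (deg R - k + 1)].  Finally [2 sum_(t <= l) min(t, s) = s (2l - s + 1)]. *)

Lemma coef_XsubC_exp {R : comNzRingType} (c : R) t j :
  (('X - c%:P) ^+ t)`_j = (- c) ^+ (t - j) *+ 'C(t, j).
Proof.
elim: t j => [|t IHt] j; first by rewrite expr0 coefC; case: j.
rewrite exprS mulrBl coefB coefXM coefCM; case: j => [|j].
  by rewrite eqxx sub0r IHt !bin0 !mulr1n subn0 -mulNr -exprS.
rewrite -[j.+1 == 0%N]/false succnK !IHt binS mulrnDr subSS addrC -mulNr.
have [tj|jt] := leqP t j; first by rewrite (bin_small (n := t)) ?ltnS // !mulr0n mulr0.
by rewrite mulrnAr -exprS subnSK.
Qed.

Section PolyDegree.
Context {R : nzRingType}.
Implicit Types p q : {poly R}.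

Lemma pdegXn m : pdeg ('X^m : {poly R}) = m.
Proof. by rewrite /pdeg size_polyXn. Qed.

Lemma pdegN p : pdeg (- p) = pdeg p.
Proof. by rewrite /pdeg size_polyN. Qed.

Lemma pdegMn_le p m : (pdeg (p *+ m) <= pdeg p)%N.
Proof. by rewrite /pdeg -scaler_nat -!subn1 leq_sub2r // size_scale_leq. Qed.

Lemma pdegM_le p q : (pdeg (p * q) <= pdeg p + pdeg q)%N.
Proof. by rewrite /pdeg; have := size_polyMleq p q; lia. Qed.

End PolyDegree.

Section IdomainPolyDegree.
Context {R : idomainType}.
Implicit Types p q : {poly R}.

Lemma pdegM p q : p != 0 -> q != 0 -> pdeg (p * q) = (pdeg p + pdeg q)%N.
Proof.
by move=> p0 q0; rewrite /pdeg size_mul // (polySpred p0) (polySpred q0) addSn addnS.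
Qed.

Lemma pdegX p m : pdeg (p ^+ m) = (m * pdeg p)%N.
Proof. by rewrite /pdeg size_exp mulnC. Qed.

Lemma pdeg_prod (I : finType) (P : pred I) (f : I -> {poly R}) :
  (forall i, P i -> f i != 0) ->
  pdeg (\prod_(i | P i) f i) = (\sum_(i | P i) pdeg (f i))%N.
Proof.
move=> nzf; have [] : \prod_(i | P i) f i != 0 /\
    pdeg (\prod_(i | P i) f i) = (\sum_(i | P i) pdeg (f i))%N; last by [].
apply: (big_ind2 (fun p d => p != 0 /\ pdeg p = d)) => [|p1 d1 p2 d2 [nz1 <-] [nz2 <-]|i /nzf].
- by rewrite oner_eq0 /pdeg size_poly1.
- by rewrite mulf_neq0 // pdegM.
- by [].
Qed.

Lemma pdeg_det_trig m (V : 'M[{poly R}]_m) :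
  is_trig_mx V -> (forall i, V i i != 0) -> pdeg (\det V) = (\sum_i pdeg (V i i))%N.
Proof. by move=> /det_trig -> nzV; apply: pdeg_prod. Qed.

End IdomainPolyDegree.

Lemma Delta_trig {F : fieldType} m (V : 'M[{poly F}]_m) :
  is_trig_mx V -> (forall i, V i i != 0) ->
  Delta V = (\sum_i (rowdeg V i - pdeg (V i i)))%N.
Proof.
move=> trV nzV; rewrite /Delta /mxdeg pdeg_det_trig //.
have -> : (\sum_i rowdeg V i = \sum_i (rowdeg V i - pdeg (V i i)) + \sum_i pdeg (V i i))%N.
  by rewrite -big_split; apply: eq_bigr => i _ /=; rewrite subnK //; apply: leq_bigmax.
by rewrite PoszD addrK.
Qed.

Lemma double_sum_minn s m : (2 * \sum_(t < m.+1) minn t s)%N =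
  if (m <= s)%N then (m * m.+1)%N else (s * (2 * m + 1 - s))%N.
Proof.
elim: m => [|m IHm]; first by rewrite big_ord1 min0n.
rewrite big_ord_recr /= mulnDr IHm.
by case: (leqP m s) => ms; case: (leqP m.+1 s) => m1s; nia.
Qed.

Lemma double_sum_minn_ge {s m} : (s <= m)%N ->
  (2 * \sum_(t < m.+1) minn t s)%N = (s * (2 * m + 1 - s))%N.
Proof.
move=> s_le_m; rewrite double_sum_minn; case: ifP => // m_le_s.
have -> : m = s by lia.
nia.
Qed.

Section InterpolationMatrix.
Variables (F : fieldType) (G R : {poly F}) (k s l : nat).

(* One formula for both shapes of [P^(t)]: when [t < s], [t - s] truncates to [0]. *)
Lemma coef_Pt t j : (Pt G R s t)`_j =
  if (t - s <= j)%N then G ^+ (s - t) * (- R) ^+ (t - j) *+ 'C(minn t s, j - (t - s))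
  else 0.
Proof.
rewrite /Pt; case: (ltnP t s) => [ts|st].
  have /eqP ts0 : (t - s == 0)%N by rewrite subn_eq0 ltnW.
  by rewrite coefCM coef_XsubC_exp mulrnAr ts0 subn0.
have /eqP st0 : (s - t == 0)%N by rewrite subn_eq0.
rewrite st0 expr0 mul1r coefXnM coef_XsubC_exp ltnNge.
case: (leqP (t - s) j) => //= tsj.
have [jt|tj] := leqP j t; first by rewrite (_ : s - (j - (t - s)) = t - j)%N //; lia.
by rewrite bin_small ?mulr0n //; lia.
Qed.

Lemma coef_Pt_eq0 t j : (t < j)%N || (j < t - s)%N -> (Pt G R s t)`_j = 0.
Proof.
rewrite coef_Pt; case/orP => [tj|jts]; last by rewrite leqNgt jts.
by case: ifP => // _; rewrite bin_small ?mulr0n //; lia.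
Qed.

Lemma coef_Pt_diag t : (Pt G R s t)`_t = G ^+ (s - t).
Proof. by rewrite coef_Pt leq_subr subnn expr0 mulr1 -minnE binn mulr1n. Qed.

Lemma coef_Pt_lowest t : (Pt G R s t)`_(t - s) = G ^+ (s - t) * (- R) ^+ minn t s.
Proof. by rewrite coef_Pt leqnn subnn bin0 mulr1n -minnE. Qed.

Lemma pdeg_coef_Pt_le t j :
  (pdeg ((Pt G R s t)`_j) <= (s - t) * pdeg G + (t - j) * pdeg R)%N.
Proof.
rewrite coef_Pt; case: ifP => _; last by rewrite /pdeg size_poly0.
apply: leq_trans (pdegMn_le _ _) _; apply: leq_trans (pdegM_le _ _) _.
by rewrite !pdegX pdegN.
Qed.

Local Notation M := (Amat G R s l *m Wmat F k l).

Lemma coef_AW t j : M t j = (Pt G R s t)`_j * 'X^(j * (k - 1)).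
Proof. by rewrite mul_mx_diag !mxE. Qed.

Lemma AW_trig : is_trig_mx M.
Proof. by apply/is_trig_mxP => t j tj; rewrite coef_AW coef_Pt_eq0 ?tj ?mul0r. Qed.

Hypotheses (G_neq0 : G != 0) (R_neq0 : R != 0) (k_le_degR : (k - 1 <= pdeg R)%N).

Lemma AW_diag_neq0 t : M t t != 0.
Proof. by rewrite coef_AW coef_Pt_diag mulf_neq0 ?expf_neq0 ?polyX_eq0. Qed.

Lemma pdeg_AW_diag t : pdeg (M t t) = ((s - t) * pdeg G + t * (k - 1))%N.
Proof.
by rewrite coef_AW coef_Pt_diag pdegM ?expf_neq0 ?polyX_eq0 // pdegXn pdegX.
Qed.

Lemma rowdeg_AW (t : 'I_l.+1) :
  rowdeg M t = ((s - t) * pdeg G + minn t s * pdeg R + (t - s) * (k - 1))%N.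
Proof.
apply/eqP; rewrite eqn_leq; apply/andP; split.
  apply/bigmax_leqP => j _; rewrite coef_AW.
  have [/coef_Pt_eq0 -> | ] := boolP ((t < j)%N || (j < t - s)%N).
    by rewrite mul0r /pdeg size_poly0.
  rewrite negb_or -!leqNgt => /andP [jt tsj].
  apply: leq_trans (pdegM_le _ _) _; rewrite pdegXn.
  have := pdeg_coef_Pt_le t j; nia.
have ts_l : (t - s < l.+1)%N by rewrite ltnS (leq_trans (leq_subr _ _)) // -ltnS.
apply: leq_trans (leq_bigmax (Ordinal ts_l)).
rewrite coef_AW coef_Pt_lowest /=.
by rewrite !pdegM ?mulf_neq0 ?expf_neq0 ?oppr_eq0 ?polyX_eq0 // pdegXn !pdegX pdegN.
Qed.

Lemma Delta_AW : Delta M = ((\sum_(t < l.+1) minn t s) * (pdeg R - (k - 1)))%N.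
Proof.
rewrite Delta_trig ?AW_trig //; last exact: AW_diag_neq0.
rewrite big_distrl; congr Posz.
apply: eq_bigr => t _ /=; rewrite rowdeg_AW pdeg_AW_diag -addnA subnDl.
have -> : (t * (k - 1) = (t - s) * (k - 1) + minn t s * (k - 1))%N.
  by rewrite -mulnDl minnE subnKC ?leq_subr.
by rewrite addnC subnDl -mulnBr.
Qed.

Lemma Delta_AW_closed : (0 < k)%N -> (s <= l)%N ->
  ((Delta M)%:~R : rat) =
    1 / 2 * (2 * l%:R - s%:R + 1) * s%:R * ((pdeg R)%:R - k%:R + 1).
Proof.
move=> k_gt0 s_le_l; set S := (\sum_(t < l.+1) minn t s)%N.
have twoS : 2 * (S%:R : rat) = s%:R * (2 * l%:R + 1 - s%:R).
  rewrite -[in LHS]natrM double_sum_minn_ge // natrM natrB; last by lia.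
  by rewrite natrD natrM.
rewrite Delta_AW -[LHS]/((S * (pdeg R - (k - 1)))%:R : rat) natrM !natrB //.
have -> : (S%:R : rat) = s%:R * (2 * l%:R + 1 - s%:R) / 2 by rewrite -twoS; field.
by field.
Qed.

Lemma Delta_AW_le : (s <= l)%N -> Delta M <= (l * s * (pdeg R + 1 - k))%:Z.
Proof.
move=> s_le_l; rewrite Delta_AW lez_nat leq_mul //; last by lia.
by have := double_sum_minn_ge s_le_l; nia.
Qed.

End InterpolationMatrix.

Lemma size_interpolant_gt {F : fieldType} {n k} {alpha w r : 'I_n -> F} {R : {poly F}} :
  (forall i, w i != 0) -> (forall i, R.[alpha i] = r i / w i) ->
  ~ in_GRS k alpha w r -> (k < size R)%N.
Proof.
move=> w_neq0 R_interp notGRS; rewrite ltnNge; apply/negP => size_R; apply: notGRS.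
by exists R; split=> // i; rewrite R_interp mulrC divfK.
Qed.

Theorem lemma6 (F : finFieldType) (n k s l : nat)
  (alpha w : 'I_n -> F) (r : 'I_n -> F) (R : {poly F}) :
  (1 <= k)%N -> (k < n)%N -> (n < #|F|)%N ->
  injective alpha -> (forall i, alpha i != 0) -> (forall i, w i != 0) ->
  (size R <= n)%N -> (forall i, R.[alpha i] = r i / w i) ->
  (1 <= s)%N -> (s <= l)%N ->
  ~ in_GRS k alpha w r ->
  ((Delta (Amat (Gpoly alpha) R s l *m Wmat F k l))%:~R : rat)
    = 1 / 2 * (2 * l%:R - s%:R + 1) * s%:R * ((pdeg R)%:R - k%:R + 1)
  /\ Delta (Amat (Gpoly alpha) R s l *m Wmat F k l) <= (l * s * (n - k))%:Z.
Proof.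
move=> k_gt0 _ _ _ _ w_neq0 size_R R_interp _ s_le_l notGRS.
have k_lt_sizeR := size_interpolant_gt w_neq0 R_interp notGRS.
have k_le_dR : (k <= pdeg R)%N by rewrite /pdeg -ltnS (ltn_predK k_lt_sizeR).
have dR_lt_n : (pdeg R < n)%N.
  by apply: leq_trans size_R; rewrite /pdeg (ltn_predK k_lt_sizeR).
have R_neq0 : R != 0 by rewrite -size_poly_gt0 (leq_ltn_trans (leq0n k)).
have G_neq0 : Gpoly alpha != 0 by apply/monic_neq0/monic_prod_XsubC.
have k1_le_dR : (k - 1 <= pdeg R)%N := leq_trans (leq_subr 1 k) k_le_dR.
split; first exact: Delta_AW_closed.
apply: le_trans; first exact: Delta_AW_le.
by rewrite lez_nat leq_mul // leq_sub2r // addn1.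
Qed.
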